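(* Let $n>1$ be an integer, let $D'\in\mathcal{T}_{n-1}$ and let $b\in V(D')$. Let $D$ be the digraph with $V(D)=V(D')\cup\{a\}$, where $a$ is a new vertex, and whose arc set is defined by one of the following rules: (i) if $b$ is domination-forced in $D'$, then $A(D)=A(D')\cup\{ba,aa\}$; (ii) if $bb$ is not an arc, $d^+_{D'}(f^-_{D'}(b))=1$ and $f^-_{D'}(b)$ is domination-forced in $D'$, then $A(D)=A(D')\cup\{ab,aa\}$. Then $D\in\mathcal{T}_n$.
   Context: Digraphs are finite and may contain loops; between two distinct vertices there may be arcs in one or both directions, no repeated arcs; $A(D)$ is the arc set. $N^-(v)=\{u: uv\text{ is an arc}\}$, $N^+(v)=\{u:vu\text{ is an arc}\}$ (loops included), $d^+(v)=|N^+(v)|$. An OLD set of $D$ is a set $S\subseteq V(D)$ such that every vertex has an in-neighbour in $S$ and for every two distinct vertices $u,w$ some vertex of $S$ lies in exactly one of $N^-(u),N^-(w)$. $D$ is locatable if it has an OLD set, and then $\gamma_{OL}(D)$ is the minimum size of an OLD set. A vertex $v$ is domination-forced if some vertex $w$ has $N^-(w)=\{v\}$. An arc $xy$ (possibly a loop) is forcing if $N^-(y)=\{x\}$ or there is a vertex $z$ with $N^-(z)=N^-(y)\setminus\{x\}$. In a locatable digraph $D'$ of order $m$ with $\gamma_{OL}(D')=m$, every vertex $v$ is the head of exactly one forcing arc; its tail is denoted $f^-_{D'}(v)$. The underlying graph of $D$ is the simple undirected graph on $V(D)$ with an edge $xy$ ($x\ne y$) whenever $xy$ or $yx$ is an arc.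 $\mathcal{T}_n$ is the set of all connected locatable digraphs $D$ of order $n$ with $\gamma_{OL}(D)=n$ whose underlying graph is a tree. *)

(* A digraph on a finite vertex type V is a relation
   D : rel V, where D u v means that uv is an arc (loops allowed). *)
From mathcomp Require Import all_boot.
Set Implicit Arguments. Unset Strict Implicit. Unset Printing Implicit Defensive.

Section Digraphs.
Variable V : finType.
Implicit Types (D : rel V) (S : {set V}).

Definition inN D (v : V) : {set V} := [set u | D u v].
Definition outN D (v : V) : {set V} := [set u | D v u].
Definition outdeg D (v : V) : nat := #|outN D v|.

Definition OLD D S : Prop :=
  (forall v : V, exists2 u, u \in S & D u v) /\
  (forall u w : V, u != w ->
     exists2 s, s \in S & (s \in inN D u) (+) (s \in inN D w)).

Definition locatable D : Prop := exists S, OLD D S.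

Definition gammaOL_is D (k : nat) : Prop :=
  (exists2 S, OLD D S & #|S| = k) /\ (forall S, OLD D S -> k <= #|S|).

Definition dom_forced D (v : V) : Prop := exists w, inN D w = [set v].

Definition forcing_arc D (x y : V) : Prop :=
  D x y /\ (inN D y = [set x] \/ exists z, inN D z = inN D y :\ x).

Definition underlying D : rel V := fun x y => (x != y) && (D x y || D y x).

Definition ug_connected D : Prop := forall x y : V, connect (underlying D) x y.

Definition ug_acyclic D : Prop :=
  forall c : seq V, 3 <= size c -> uniq c -> ~~ cycle (underlying D) c.

Definition ug_tree D : Prop := ug_connected D /\ ug_acyclic D.

Definition in_T (n : nat) D : Prop :=
  #|V| = n /\ ug_connected D /\ locatable D /\ gammaOL_is D n /\ ug_tree D.

End Digraphs.

(* Extensions of D' by a new vertex a = None *)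
Definition ext_i (V : finType) (D' : rel V) (b : V) : rel (option V) :=
  fun x y => match x, y with
             | Some u, Some v => D' u v
             | Some u, None => u == b
             | None, None => true
             | None, Some _ => false
             end.

Definition ext_ii (V : finType) (D' : rel V) (b : V) : rel (option V) :=
  fun x y => match x, y with
             | Some u, Some v => D' u v
             | None, Some v => v == b
             | None, None => true
             | Some _, None => false
             end.

From mathcomp Require Import all_boot.
From Stdlib Require Import Classical.
Set Implicit Arguments. Unset Strict Implicit. Unset Printing Implicit Defensive.

Section OLDSets.
Variable V : finType.
Implicit Types (D : rel V) (S : {set V}).

Lemma OLD_subset D S S' : S \subset S' -> OLD D S -> OLD D S'.
Proof.
move=> /subsetP sSS' [dom sep]; split=> [v | u w uw].
  by have [s /sSS' s'] := dom v; exists s.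
by have [s /sSS' s'] := sep u w uw; exists s.
Qed.

Lemma OLD_setT D : locatable D -> OLD D setT.
Proof. by case=> S; apply: OLD_subset; apply: subsetT. Qed.

Lemma OLD_setTP D :
  OLD D setT <-> (forall v, exists u, D u v) /\ injective (inN D).
Proof.
split=> [[dom sep] | [dom injD]]; split.
- by move=> v; have [u _ Duv] := dom v; exists u.
- move=> u w eq_uw; case: (eqVneq u w) => // uw.
  by have [s _] := sep u w uw; rewrite eq_uw addbb.
- by move=> v; have [u Duv] := dom v; exists u.
- move=> u w uw.
  case: (pickP [pred s | (s \in inN D u) (+) (s \in inN D w)]) => [s sep_s|same].
    by exists s.
  case/eqP: uw; apply: injD; apply/setP => s.
  by apply/eqP; rewrite -negb_add; apply/negbT/same.
Qed.

Definition forcing_tails D : Prop := forall x, exists y, forcing_arc D x y.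

Lemma forcing_tail_mem D S x y : OLD D S -> forcing_arc D x y -> x \in S.
Proof.
move=> [dom sep] [Dxy [inNy | [z inNz]]].
  have [u uS Duy] := dom y.
  have: u \in inN D y by rewrite inE.
  by rewrite inNy inE => /eqP <-.
have zy : z != y.
  apply: contraTneq Dxy => <-.
  by have := setD11 x (inN D y); rewrite -inNz inE => ->.
have [s sS] := sep z y zy; rewrite inNz in_setD1.
by case: eqP sS => [-> | _ _] //=; rewrite addbb.
Qed.

Lemma OLD_setTD1 D v :
  OLD D setT -> (forall y, ~ forcing_arc D v y) -> OLD D (setT :\ v).
Proof.
move=> [dom sep] noforce; split=> [y | u w uw].
  case: (pickP [pred t | (t != v) && D t y]) => [t /andP[tv Dty] | others].
    by exists t; rewrite // !inE tv.
  have [u _ Duy] := dom y.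
  have Dvy : D v y by case: (eqVneq u v) (others u) => [<- // | uv] /=; rewrite uv Duy.
  case: (noforce y); split=> //; left; apply/setP => t; rewrite !inE.
  by case: (eqVneq t v) (others t) => [-> // | tv] /=; rewrite tv => /= ->.
case: (pickP [pred t | (t != v) && ((t \in inN D u) (+) (t \in inN D w))])
  => [t /andP[tv sep_t] | others].
  by exists t; rewrite // !inE tv.
have agree t : t != v -> (t \in inN D u) = (t \in inN D w).
  by move=> tv; move: (others t); rewrite /= tv /= => /negbT; rewrite negb_add => /eqP.
have [s _] := sep u w uw.
case: (eqVneq s v) => [-> | sv]; last by rewrite agree ?addbb.
case vu: (v \in inN D u) => /= vw.
- case: (noforce u); split; first by rewrite inE in vu.
  right; exists w; apply/setP => t; rewrite in_setD1.
  by case: (eqVneq t v) => [-> | tv] /=; rewrite ?(negbTE vw) ?agree.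
- case: (noforce w); split; first by rewrite inE in vw.
  right; exists u; apply/setP => t; rewrite in_setD1.
  by case: (eqVneq t v) => [-> | tv] /=; rewrite ?vu ?agree.
Qed.

Lemma gammaOL_setT D : OLD D setT -> gammaOL_is D #|V| <-> forcing_tails D.
Proof.
move=> OLDT; split=> [[_ minD] x | forcD].
  apply: NNPP => /(not_ex_all_not _ _)/(OLD_setTD1 OLDT)/minD.
  by rewrite -cardsT (cardsD1 x) in_setT ltnn.
split=> [|S OLDS]; first by exists setT; rewrite ?cardsT.
suff -> : S = setT by rewrite cardsT.
apply/setP => x; rewrite in_setT.
by have [y fxy] := forcD x; apply: forcing_tail_mem fxy.
Qed.

Lemma in_T_card D :
  in_T #|V| D <-> [/\ OLD D setT, forcing_tails D & ug_tree D].
Proof.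
split=> [[_ [_ [locD [gammaD treeD]]]] | [OLDT forcD treeD]].
  have OLDT := OLD_setT locD.
  by split=> //; apply/(gammaOL_setT OLDT).
have gammaD : gammaOL_is D #|V| by apply/(gammaOL_setT OLDT).
by split; [|split; [exact: treeD.1 | split; [exists setT |]]].
Qed.

Lemma outN_outdeg1 D x y : outdeg D x = 1 -> D x y -> outN D x = [set y].
Proof.
move=> out1 Dxy; apply/esym/eqP.
by rewrite eqEcard sub1set inE Dxy cards1 -/(outdeg D x) out1.
Qed.

End OLDSets.

Lemma underlying_sym (V : finType) (D : rel V) x y :
  underlying D x y = underlying D y x.
Proof. by rewrite /underlying eq_sym orbC. Qed.

Section Extension.
Variables (V : finType) (D : rel V) (b : V) (E : rel (option V)).
Hypothesis E_Some : forall u v, E (Some u) (Some v) = D u v.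

Lemma mem_inN_Some u v : (Some u \in inN E (Some v)) = (u \in inN D v).
Proof. by rewrite !inE E_Some. Qed.

Lemma OLD_setT_ext :
  E None None -> (forall u, inN E None != inN E (Some u)) ->
  OLD D setT -> OLD E setT.
Proof.
move=> loop new_sep /OLD_setTP[dom injD]; apply/OLD_setTP; split.
  by case=> [v|]; [have [u Duv] := dom v; exists (Some u); rewrite E_Some | exists None].
case=> [u|] [w|] // eq_uw.
- congr Some; apply: injD; apply/setP => t.
  by rewrite -!mem_inN_Some eq_uw.
- by move: (new_sep u); rewrite eq_uw eqxx.
- by move: (new_sep w); rewrite eq_uw eqxx.
Qed.

Lemma forcing_arc_ext x y :
  forcing_arc D x y -> ~~ E None (Some y) ->
  (forall z, inN D z = inN D y :\ x -> ~~ E None (Some z)) ->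
  forcing_arc E (Some x) (Some y).
Proof.
move=> [Dxy [inNy | [z inNz]]] oldy oldz; split; rewrite ?E_Some //.
  left; apply/setP => -[t|]; last by rewrite !inE (negbTE oldy).
  by rewrite mem_inN_Some inNy !inE.
right; exists (Some z); apply/setP => -[t|].
  by rewrite in_setD1 !mem_inN_Some inNz in_setD1.
by rewrite !inE (negbTE oldy) (negbTE (oldz z inNz)).
Qed.

Hypothesis E_new : forall u, E None (Some u) || E (Some u) None = (u == b).

Lemma underlying_Some u v : underlying E (Some u) (Some v) = underlying D u v.
Proof. by rewrite /underlying !E_Some. Qed.

Lemma underlying_None x : underlying E None x = (x == Some b).
Proof. by case: x => [u|] //; rewrite /underlying E_new. Qed.

Lemma path_map_Some x p :
  path (underlying E) (Some x) (map Some p) = path (underlying D) x p.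
Proof. by elim: p x => [|y p IHp] x //=; rewrite underlying_Some IHp. Qed.

Lemma ug_connected_ext : ug_connected D -> ug_connected E.
Proof.
have connect_Some u v :
    connect (underlying D) u v -> connect (underlying E) (Some u) (Some v).
  move=> /connectP[p pth ->]; apply/connectP.
  by exists (map Some p); rewrite ?path_map_Some ?last_map.
move=> connD.
have to_b x : connect (underlying E) x (Some b).
  case: x => [u|]; first exact: connect_Some.
  by apply: connect1; rewrite underlying_None.
move=> x y; apply: connect_trans (to_b x) _.
by rewrite (sym_connect_sym (@underlying_sym _ E)) to_b.
Qed.

(* On a cycle through the new vertex, both of its neighbours would be [Some b]. *)
Lemma ug_acyclic_ext : ug_acyclic D -> ug_acyclic E.
Proof.
move=> acycD c c_size c_uniq.
case: (boolP (None \in c)) => [/rot_to[i s c_rot] | c_old].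
  rewrite -(rot_cycle i) c_rot.
  rewrite -(size_rot i) c_rot in c_size; rewrite -(rot_uniq i) c_rot in c_uniq.
  case: s c_rot c_size c_uniq => [|x [|y s]] // _ _.
  rewrite /cycle rcons_path /= => /and4P[_ /negP xs _ _].
  rewrite (underlying_None x) (underlying_sym _ _ None) underlying_None.
  by apply/negP => /andP[/andP[/eqP xb _] /eqP lb]; apply: xs; rewrite xb -lb mem_last.
have c_Some : c = map Some (pmap id c).
  rewrite pmapS_filter map_id; apply/esym/all_filterP/allP => -[// | None_c].
  by rewrite None_c in c_old.
move: c_size c_uniq; rewrite c_Some size_map (map_inj_uniq (@Some_inj _)).
move=> /acycD/[apply].
by case: (pmap id c) => [|x p] //=; rewrite -map_rcons path_map_Some.
Qed.

Lemma ug_tree_ext : ug_tree D -> ug_tree E.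
Proof. by case=> connD acycD; split; [apply: ug_connected_ext | apply: ug_acyclic_ext]. Qed.

End Extension.

Lemma ext_i_in_T (V : finType) (D : rel V) (b : V) :
  in_T #|V| D -> dom_forced D b -> in_T #|{: option V}| (ext_i D b).
Proof.
move=> /in_T_card[OLDD forcD treeD] [w inNw].
have E_Some u v : ext_i D b (Some u) (Some v) = D u v by [].
have E_new u : ext_i D b None (Some u) || ext_i D b (Some u) None = (u == b) by [].
apply/in_T_card; split; last exact: ug_tree_ext E_Some E_new treeD.
- apply: OLD_setT_ext E_Some _ _ OLDD => // u.
  by apply/eqP => /setP/(_ None); rewrite !inE.
- case=> [x|].
    by have [y fxy] := forcD x; exists (Some y); apply: (forcing_arc_ext E_Some fxy).
  exists None; split=> //; right; exists (Some w).
  by apply/setP => -[t|]; rewrite !inE //= -(in_set1 t b) -inNw inE.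
Qed.

Lemma ext_ii_in_T (V : finType) (D : rel V) (b f : V) :
  in_T #|V| D -> D f b -> outdeg D f = 1 -> dom_forced D f ->
  in_T #|{: option V}| (ext_ii D b).
Proof.
move=> /in_T_card[OLDD forcD treeD] Dfb /outN_outdeg1/(_ Dfb) outNf [w inNw].
have inNb : inN D b = [set f].
  suff <- : w = b by [].
  have: f \in inN D w by rewrite inNw set11.
  by rewrite inE => Dfw; apply/set1P; rewrite -outNf inE.
have E_Some u v : ext_ii D b (Some u) (Some v) = D u v by [].
have E_new u : ext_ii D b None (Some u) || ext_ii D b (Some u) None = (u == b).
  by rewrite orbF.
apply/in_T_card; split; last exact: ug_tree_ext E_Some E_new treeD.
- have /OLD_setTP[dom _] := OLDD.
  apply: OLD_setT_ext E_Some _ _ OLDD => // u.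
  have [s Dsu] := dom u.
  by apply/eqP => /setP/(_ (Some s)); rewrite !inE /= Dsu.
- case=> [x|]; last by exists None; split=> //; left; apply/setP => -[t|]; rewrite !inE.
  have [y fxy] := forcD x.
  case: (eqVneq y b) => [yb | yNb].
    have xf : x = f by apply/set1P; rewrite -inNb inE -yb; case: fxy.
    exists (Some b); split; rewrite xf //; right; exists None.
    apply/setP => -[t|]; rewrite !inE //= ?eqxx //.
    move/setP: inNb => /(_ t); rewrite !inE => ->.
    by case: (eqVneq t f) => [-> | _]; rewrite ?eqxx ?andbF.
  exists (Some y); apply: (forcing_arc_ext E_Some fxy) => // z inNz.
  apply/eqP => zb.
  have: f \in inN D y :\ x by rewrite -inNz zb inNb set11.
  rewrite in_setD1 inE => /andP[_ Dfy].
  have: y \in outN D f by rewrite inE.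
  by rewrite outNf inE (negbTE yNb).
Qed.

Theorem lemma25 (n : nat) (V : finType) (D' : rel V) (b : V) :
  1 < n -> in_T (n.-1) D' ->
  (dom_forced D' b -> in_T n (ext_i D' b)) /\
  (forall f : V, forcing_arc D' f b ->
     ~~ D' b b -> outdeg D' f = 1 -> dom_forced D' f ->
     in_T n (ext_ii D' b)).
Proof.
move=> n_gt1 TD'; have cardV : #|V| = n.-1 by case: TD'.
rewrite -cardV in TD'.
have -> : n = #|{: option V}| by rewrite card_option cardV prednK // ltnW.
split=> [|f [Dfb _] _]; first exact: ext_i_in_T.
exact: ext_ii_in_T.
Qed.
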